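(* Let $\sigma$ be a countable relational signature containing distinct relation symbols $Q,R$ with the arity of $R$ at least $2$. Let $\mathbf P=\{\mathcal A\in\mathbf S_\sigma:\mathcal A\text{ has only finitely many orbits}\}$. Then $\mathbf P$ is not expressible in $FO(\sigma)$; every abstract logic $L(\sigma)\geq FO(\sigma)$ that can express $\mathbf P$ fails the $\aleph_0$-compactness property; and every such logic which is moreover closed under negation has no sound and complete proof system.
   Context: An orbit of a $\sigma$-structure $\mathcal A$ is an equivalence class of the relation $a\sim b\iff f(a)=b$ for some $f\in\mathrm{Aut}(\mathcal A)$; the orbits partition $A$. $\mathbf S_\sigma$ is the class of $\sigma$-structures. An abstract logic over $\sigma$ is a pair $(L(\sigma),\models_{L(\sigma)})$ with isomorphism-invariant satisfaction relation; a class is expressed by it if some sentence is satisfied exactly by its members; $L(\sigma)\geq FO(\sigma)$ means every first-order expressible class is $L(\sigma)$-expressible; $\aleph_0$-compactness: every countable finitely satisfiable set of sentences is satisfiable; closed under negation: each sentence has a sentence true exactly where it is false. A proof system $(\Pi,p,c)$ assigns to each $\pi$ a finite sequence of premisses and a conclusion; sound: premisses semantically entail the conclusion; complete: whenever $\Gamma$ entails $\psi$ some $\pi$ has conclusion $\psi$ and all premisses in $\Gamma$. *)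

From mathcomp Require Import all_boot.
From Stdlib Require Import List.
Import ListNotations.
Set Implicit Arguments.
Unset Strict Implicit.
Unset Printing Implicit Defensive.

Section Logic.
Variables (S : Type) (ar : S -> nat).

(* sigma-structures: nonempty carrier, interpretation of each relation symbol
   as a set of ar(s)-tuples (tuples = functions 'I_(ar s) -> carrier). *)
Record structure := Structure {
  carrier :> Type;
  point : carrier;
  interp : forall s : S, ('I_(ar s) -> carrier) -> Prop
}.
Arguments interp : clear implicits.
Arguments interp A s a : rename.

Definition is_iso (A B : structure) (f : A -> B) : Prop :=
  bijective f /\
  forall (s : S) (a : 'I_(ar s) -> A), interp A s a <-> interp B s (fun i => f (a i)).

Definition isomorphic (A B : structure) : Prop := exists f : A -> B, is_iso f.

Definition automorphism (A : structure) (f : A -> A) : Prop := is_iso f.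

Definition same_orbit (A : structure) (a b : A) : Prop :=
  exists f : A -> A, automorphism f /\ f a = b.

Definition finitely_many_orbits (A : structure) : Prop :=
  exists l : list A, forall a : A, exists b, In b l /\ same_orbit b a.

Definition struct_class := structure -> Prop.

Inductive formula :=
| FRel (s : S) (args : 'I_(ar s) -> nat)
| FEq (x y : nat)
| FNeg (phi : formula)
| FAnd (phi psi : formula)
| FEx (x : nat) (phi : formula).

Definition upd (A : structure) (v : nat -> A) (x : nat) (a : A) : nat -> A :=
  fun y => if y == x then a else v y.

Fixpoint eval (A : structure) (v : nat -> A) (phi : formula) : Prop :=
  match phi with
  | FRel s args => interp A s (fun i => v (args i))
  | FEq x y => v x = v y
  | FNeg phi => ~ eval v phi
  | FAnd phi psi => eval v phi /\ eval v psi
  | FEx x phi => exists a : A, eval (upd v x a) phi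
  end.

Fixpoint free (x : nat) (phi : formula) : Prop :=
  match phi with
  | FRel s args => exists i, args i = x
  | FEq y z => x = y \/ x = z
  | FNeg phi => free x phi
  | FAnd phi psi => free x phi \/ free x psi
  | FEx y phi => x <> y /\ free x phi
  end.

Definition fo_sentence (phi : formula) : Prop := forall x, ~ free x phi.

Definition fo_sat (A : structure) (phi : formula) : Prop :=
  forall v : nat -> A, eval v phi.

Definition FO_expressible (K : struct_class) : Prop :=
  exists phi, fo_sentence phi /\ forall A, K A <-> fo_sat A phi.

Record abstract_logic := AbstractLogic {
  sentence : Type;
  sat : structure -> sentence -> Prop;
  sat_iso : forall A B phi, isomorphic A B -> (sat A phi <-> sat B phi)
}.

Definition expressible (L : abstract_logic) (K : struct_class) : Prop :=
  exists phi : sentence L, forall A, K A <-> sat A phi.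

Definition geq_FO (L : abstract_logic) : Prop :=
  forall K, FO_expressible K -> expressible L K.

Definition countable_set (T : Type) (G : T -> Prop) : Prop :=
  exists e : nat -> option T, forall x, G x <-> exists n, e n = Some x.

Definition satisfies_all (L : abstract_logic) (A : structure) (G : sentence L -> Prop) :=
  forall phi, G phi -> sat A phi.

Definition satisfiable (L : abstract_logic) (G : sentence L -> Prop) : Prop :=
  exists A, satisfies_all A G.

Definition finitely_satisfiable (L : abstract_logic) (G : sentence L -> Prop) : Prop :=
  forall l : list (sentence L), (forall phi, In phi l -> G phi) ->
    exists A, forall phi, In phi l -> sat A phi.

Definition aleph0_compact (L : abstract_logic) : Prop :=
  forall G : sentence L -> Prop, countable_set G -> finitely_satisfiable G -> satisfiable G.

Definition closed_under_negation (L : abstract_logic) : Prop :=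
  forall phi : sentence L, exists psi : sentence L, forall A, sat A psi <-> ~ sat A phi.

Definition entails (L : abstract_logic) (G : sentence L -> Prop) (psi : sentence L) : Prop :=
  forall A, satisfies_all A G -> sat A psi.

Record proof_system (L : abstract_logic) := ProofSystem {
  proofs : Type;
  premisses : proofs -> list (sentence L);
  conclusion : proofs -> sentence L
}.

Definition ps_sound (L : abstract_logic) (P : proof_system L) : Prop :=
  forall pi : proofs P,
    entails (fun phi => In phi (premisses pi)) (conclusion pi).

Definition ps_complete (L : abstract_logic) (P : proof_system L) : Prop :=
  forall (G : sentence L -> Prop) (psi : sentence L), entails G psi ->
    exists pi : proofs P, conclusion pi = psi /\ forall phi, In phi (premisses pi) -> G phi.

End Logic.

(* Write E(x, y) for "R holds of a tuple whose first entry is x and whose other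
   entries are y"; as ar R >= 2 this reads off a binary relation from R.

   1. Not first-order.  Let [edge_structure c E] interpret R by a binary relation
      E on its first two coordinates.  When E1 and E2 are equivalence relations
      with infinitely many classes, all infinite, finite partial isomorphisms
      always extend (back-and-forth), so the two edge structures agree on every
      first-order formula.  The grid nat * nat ("same first coordinate") has a
      single orbit, while the tower {n & stage n}, stage (n+1) = nat *
      (stage n -> Prop) ("same level") has infinitely many: an automorphism
      moving level m to a higher level would inject stage m -> Prop into
      stage m, against Cantor's theorem.
   2. Not compact.  The first-order sentence chain_sentence n says that every
      element has at most one E-predecessor and that some element lies at
      depth n (an E-path of length n starts at a root).  Finite chains satisfy
      finitely many of them and have finitely many orbits; a model of all of
      them has infinitely many orbits, as depth is automorphism invariant.
   3. No proof system.  With negation, a sound and complete proof system makes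
      a logic compact, contradicting 2. *)

From Stdlib Require Import List.
From mathcomp Require Import all_boot.
From Stdlib Require Import Classical FunctionalExtensionality Eqdep_dec PeanoNat
  IndefiniteDescription RelationClasses.

Set Implicit Arguments.
Unset Strict Implicit.
Unset Printing Implicit Defensive.

Lemma list_bound_witness (C : Type) (P : C -> nat -> Prop) (l : list C) :
  (forall c, In c l -> exists k, P c k) ->
  exists M, forall c, In c l -> exists2 k, k < M & P c k.
Proof.
elim: l => [|c l IH] P_l; first by exists 0.
have [M HM] := IH (fun d d_l => P_l d (or_intror d_l)).
have [k Pk] := P_l c (or_introl erefl).
exists (maxn M k.+1) => d [<-|d_l]; first by exists k; rewrite // leq_max ltnSn orbT.
by have [k' lt_k'M Pk'] := HM d d_l; exists k'; rewrite // leq_max lt_k'M.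
Qed.

Lemma list_bound (C : Type) (f : C -> nat) (l : list C) :
  exists M, forall c, In c l -> f c < M.
Proof.
have [M HM] := @list_bound_witness C (fun c k => f c = k) l (fun c _ => ex_intro _ _ erefl).
by exists M => c /HM [k lt_kM ->].
Qed.

Lemma In_enum (T : finType) (x : T) : In x (enum T).
Proof.
have : x \in enum T by rewrite mem_enum.
by elim: (enum T) => //= y s IH; rewrite in_cons => /orP [/eqP ->|/IH]; auto.
Qed.

Lemma cantor_range (X Y : Type) (e : X -> Y) (j : (X -> Prop) -> Y) :
  injective j -> ~ (forall h, exists x, j h = e x).
Proof.
move=> j_inj j_range.
pose D x := ~ exists h, j h = e x /\ h x.
have [x0 jD] := j_range D.
have D_x0 : D x0 <-> ~ D x0.
  split=> [Dx0 Dx0' | nDx0 [h [jh hx0]]]; first by apply: Dx0; exists D.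
  by apply: nDx0; rewrite (j_inj _ _ (etrans jh (esym jD))) in hx0.
have nD_x0 : ~ D x0 by move=> Dx0; exact: (proj1 D_x0 Dx0 Dx0).
exact: nD_x0 (proj2 D_x0 nD_x0).
Qed.

Section Semantics.
Variables (S : Type) (ar : S -> nat).

Lemma upd_same (A : structure ar) (v : nat -> A) x a : upd v x a x = a.
Proof. by rewrite /upd eqxx. Qed.

Lemma upd_other (A : structure ar) (v : nat -> A) x a y : y <> x -> upd v x a y = v y.
Proof. by rewrite /upd; case: eqP. Qed.

Lemma eval_free (A : structure ar) (phi : formula ar) (v w : nat -> A) :
  (forall x, free x phi -> v x = w x) -> (eval v phi <-> eval w phi).
Proof.
elim: phi v w => [s args|x y|phi IH|phi IH psi IH'|x phi IH] v w vw /=.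
- have -> // : (fun i => v (args i)) = (fun i => w (args i)).
  by apply: functional_extensionality => i; apply: vw; exists i.
- by rewrite (vw x (or_introl erefl)) (vw y (or_intror erefl)).
- by rewrite (IH v w vw).
- by rewrite (IH v w (fun x h => vw x (or_introl h))) (IH' v w (fun x h => vw x (or_intror h))).
- have upd_vw a y : free y phi -> upd v x a y = upd w x a y.
    move=> y_free; case: (eqVneq y x) => [->|/eqP ne]; first by rewrite !upd_same.
    by rewrite !upd_other //; apply: vw.
  by split=> -[a Ha]; exists a; have := IH _ _ (upd_vw a); tauto.
Qed.

Lemma sentence_fo_sat (A : structure ar) (phi : formula ar) (v : nat -> A) :
  fo_sentence phi -> eval v phi -> fo_sat A phi.
Proof. by move=> closed phi_v w; apply/(eval_free (w := v)) => // x /closed. Qed.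

Definition FAll (x : nat) (phi : formula ar) : formula ar := FNeg (FEx x (FNeg phi)).
Definition FImp (phi psi : formula ar) : formula ar := FNeg (FAnd phi (FNeg psi)).

Lemma eval_FAll (A : structure ar) (v : nat -> A) x phi :
  eval v (FAll x phi) <-> forall a, eval (upd v x a) phi.
Proof. by split=> [H a|H [a /(_ (H a))]] //; apply: NNPP => Ha; apply: H; exists a. Qed.

Lemma eval_FImp (A : structure ar) (v : nat -> A) phi psi :
  eval v (FImp phi psi) <-> (eval v phi -> eval v psi).
Proof. by split=> [H ? |H [? /(_ (H _))]] //; apply: NNPP => ?; apply: H. Qed.

Lemma automorphism_id (A : structure ar) : automorphism (@id A).
Proof. by split; first exists id. Qed.

End Semantics.

Definition kernel (C D : Type) (f : C -> D) (x y : C) : Prop := f x = f y.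

Lemma kernel_equivalence (C D : Type) (f : C -> D) : Equivalence (kernel f).
Proof. by split=> [x|x y|x y z]; rewrite /kernel // => ->. Qed.

Definition infinite_classes (C : Type) (E : C -> C -> Prop) : Prop :=
  (forall l : list C, exists b, forall c, In c l -> ~ E b c) /\
  (forall (c : C) (l : list C), exists b, E b c /\ ~ In b l).

Lemma kernel_infinite_classes (C : Type) (f key : C -> nat) (mk : nat -> nat -> C) :
  (forall n j, f (mk n j) = n) -> (forall n j, key (mk n j) = j) ->
  infinite_classes (kernel f).
Proof.
move=> f_mk key_mk; split=> [l|c l].
- have [M HM] := list_bound f l.
  exists (mk M 0) => c /HM; rewrite /kernel f_mk => lt_fcM eq_Mfc.
  by move: lt_fcM; rewrite -eq_Mfc ltnn.
- have [M HM] := list_bound key l.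
  exists (mk (f c) M); split=> [|/HM]; first exact: f_mk.
  by rewrite key_mk ltnn.
Qed.

Definition override (C : Type) (v : nat -> C) (x : nat) (a : C) : nat -> C :=
  fun y => if y == x then a else v y.

Definition finite_range (C : Type) (v : nat -> C) : Prop := exists l : list C, forall x, In (v x) l.

Lemma finite_range_override (C : Type) (v : nat -> C) x a :
  finite_range v -> finite_range (override v x a).
Proof. by case=> l Hl; exists (a :: l) => y; rewrite /override; case: (y == x); [left|right]. Qed.

Section BackAndForth.
Variables (C1 C2 : Type) (E1 : C1 -> C1 -> Prop) (E2 : C2 -> C2 -> Prop).

Definition finite_match (v1 : nat -> C1) (v2 : nat -> C2) : Prop :=
  [/\ finite_range v1, finite_range v2,
      forall x y, v1 x = v1 y <-> v2 x = v2 y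
    & forall x y, E1 (v1 x) (v1 y) <-> E2 (v2 x) (v2 y)].

Hypotheses (E1_equiv : Equivalence E1) (E2_equiv : Equivalence E2).

Lemma finite_match_override v1 v2 x a b :
  finite_match v1 v2 ->
  (forall w, a = v1 w <-> b = v2 w) -> (forall w, E1 a (v1 w) <-> E2 b (v2 w)) ->
  finite_match (override v1 x a) (override v2 x b).
Proof.
case=> fin1 fin2 eq12 E12 a_b aE_bE.
have [refl1 sym1 _] := E1_equiv; have [refl2 sym2 _] := E2_equiv.
split; try exact: finite_range_override.
- move=> y z; rewrite /override.
  case: (y == x); case: (z == x); [by [] | exact: a_b | | exact: eq12].
  by split=> /esym /a_b /esym.
- move=> y z; rewrite /override.
  case: (y == x); case: (z == x); [ | exact: aE_bE | | exact: E12].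
  + by split=> _; [apply: refl2 | apply: refl1].
  + by split=> [/sym1 /aE_bE /sym2 | /sym2 /aE_bE /sym1].
Qed.

Lemma forth v1 v2 x a :
  infinite_classes E2 -> finite_match v1 v2 ->
  exists b, finite_match (override v1 x a) (override v2 x b).
Proof.
move=> [new_class fresh] match12.
have [_ [l2 l2_v2] eq12 E12] := match12.
have [_ sym1 trans1] := E1_equiv; have [refl2 sym2 trans2] := E2_equiv.
case: (classic (exists y, a = v1 y)) => [[y ->]|a_new].
  by exists (v2 y); apply: finite_match_override.
case: (classic (exists y, E1 a (v1 y))) => [[y Eay]|a_classnew].
  have [b [Eby b_new]] := fresh (v2 y) l2.
  exists b; apply: finite_match_override => // w; split=> H.
  - by case: a_new; exists w.
  - by case: b_new; rewrite H.
  - by apply: trans2 Eby _; apply/E12; exact: trans1 (sym1 _ _ Eay) H.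
  - by apply: trans1 Eay _; apply/E12; exact: trans2 (sym2 _ _ Eby) H.
have [b b_new] := new_class l2.
exists b; apply: finite_match_override => // w; split=> H.
- by case: a_new; exists w.
- by case: (b_new _ (l2_v2 w)); rewrite H.
- by case: a_classnew; exists w.
- by case: (b_new _ (l2_v2 w)).
Qed.

End BackAndForth.

Lemma finite_match_sym (C1 C2 : Type) (E1 : C1 -> C1 -> Prop) (E2 : C2 -> C2 -> Prop) v1 v2 :
  finite_match E1 E2 v1 v2 -> finite_match E2 E1 v2 v1.
Proof. by case=> fin1 fin2 eq12 E12; split=> // x y; [rewrite eq12 | rewrite E12]. Qed.

Definition swap0 (i x : nat) : nat := if x == 0 then i else if x == i then 0 else x.

Lemma swap0K i : involutive (swap0 i).
Proof.
move=> x; rewrite /swap0; case: (eqVneq x 0) => [->|x0]; first by rewrite eqxx; case: eqVneq.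
by case: (eqVneq x i) => [->|xi]; rewrite ?eqxx // (negbTE x0) (negbTE xi).
Qed.

Fixpoint stage (n : nat) : Type :=
  match n with 0 => nat | m.+1 => (nat * (stage m -> Prop))%type end.

Definition stage_key (n : nat) : stage n -> nat :=
  match n with 0 => fun t => t | m.+1 => fun t => t.1 end.

Definition stage_elt (n j : nat) : stage n :=
  match n with 0 => j | m.+1 => (j, fun _ => True) end.

Lemma stage_keyK n j : stage_key (stage_elt n j) = j.
Proof. by case: n. Qed.

Definition tower := {n : nat & stage n}.
Definition level (p : tower) : nat := projT1 p.

Fixpoint lift (m k : nat) : stage m.+1 -> stage (k + m.+1) :=
  match k with 0 => fun x => x | k'.+1 => fun x => (0, fun y => y = lift k' x) end.

Lemma lift_inj m k : injective (@lift m k).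
Proof.
elim: k => //= k IH x y [] /(f_equal (fun P => P (lift k x))) same.
by apply: IH; rewrite -same.
Qed.

Section EdgeStructures.
Variables (S : Type) (ar : S -> nat) (R : S).

Definition edge_tuple (T : Type) (x y : T) : 'I_(ar R) -> T :=
  fun i => if nat_of_ord i == 0 then x else y.

Lemma edge_tuple_map (T U : Type) (f : T -> U) (x y : T) :
  (fun i => f (edge_tuple x y i)) = edge_tuple (f x) (f y).
Proof. by apply: functional_extensionality => i; rewrite /edge_tuple; case: ifP. Qed.

Definition Erel (X : structure ar) (x y : X) : Prop := @interp S ar X R (edge_tuple x y).
Definition Eat (a b : nat) : formula ar := FRel (edge_tuple a b).
Arguments Eat : simpl never.

Lemma eval_Eat (X : structure ar) (v : nat -> X) a b : eval v (Eat a b) <-> Erel (v a) (v b).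
Proof. by rewrite /= (edge_tuple_map v). Qed.

Lemma free_Eat y a b : free y (Eat a b) -> y = a \/ y = b.
Proof. by case=> i; rewrite /edge_tuple; case: ifP => _ <-; [left|right]. Qed.

Lemma aut_Erel (X : structure ar) (f : X -> X) (x y : X) :
  automorphism f -> (Erel (f x) (f y) <-> Erel x y).
Proof. by case=> _ f_iso; rewrite /Erel -(edge_tuple_map f) -f_iso. Qed.

Definition edge_structure (C : Type) (c : C) (E : C -> C -> Prop) : structure ar :=
  @Structure S ar C c (fun s t => s = R /\ forall i j : 'I_(ar s),
    nat_of_ord i = 0 -> nat_of_ord j = 1 -> E (t i) (t j)).

Lemma edge_structures_equivalent (C1 C2 : Type) (c1 : C1) (c2 : C2)
    (E1 : C1 -> C1 -> Prop) (E2 : C2 -> C2 -> Prop) :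
  Equivalence E1 -> Equivalence E2 -> infinite_classes E1 -> infinite_classes E2 ->
  forall (phi : formula ar) (v1 : nat -> C1) (v2 : nat -> C2), finite_match E1 E2 v1 v2 ->
  (@eval S ar (edge_structure c1 E1) v1 phi <-> @eval S ar (edge_structure c2 E2) v2 phi).
Proof.
move=> E1_equiv E2_equiv E1_classes E2_classes.
elim=> [s args|x y|phi IH|phi IH psi IH'|x phi IH] v1 v2 match12 /=;
  have [_ _ eq12 E12] := match12.
- by split=> -[sR E_args]; split=> // i j i0 j1; apply/E12; exact: E_args.
- exact: eq12.
- by rewrite (IH _ _ match12).
- by rewrite (IH _ _ match12) (IH' _ _ match12).
- split=> -[a phi_a].
  + have [b match_ab] := forth E1_equiv E2_equiv x a E2_classes match12.
    by exists b; apply/(IH _ _ match_ab).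
  + have [b match_ba] := forth E2_equiv E1_equiv x a E1_classes (finite_match_sym match12).
    by exists b; apply/(IH _ _ (finite_match_sym match_ba)).
Qed.

Hypothesis arR : 2 <= ar R.

Lemma edge_structureE (C : Type) (c : C) (E : C -> C -> Prop) (x y : C) :
  Erel (X := edge_structure c E) x y <-> E x y.
Proof.
split=> [[_ Exy] | Exy]; last by split=> // i j; rewrite /edge_tuple => -> ->.
exact: (Exy (Ordinal (ltnW arR)) (Ordinal arR)).
Qed.

Lemma edge_structure_autP (C : Type) (c : C) (E : C -> C -> Prop) (f : C -> C) :
  automorphism (A := edge_structure c E) f <->
  bijective f /\ forall x y, E (f x) (f y) <-> E x y.
Proof.
split=> [aut_f | [bij_f f_E]].
  by split=> [|x y]; [case: aut_f | have := @aut_Erel (edge_structure c E) f x y aut_f; rewrite !edge_structureE].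
split=> // s t; split=> -[sR t_E]; split=> // i j i0 j1; apply/f_E; exact: t_E.
Qed.

Definition grid_structure : structure ar := edge_structure (0, 0) (kernel (@fst nat nat)).

Lemma grid_orbits : finitely_many_orbits grid_structure.
Proof.
exists [:: (0, 0)] => a; exists (0, 0); split; first by left.
pose f (p : nat * nat) := (swap0 a.1 p.1, swap0 a.2 p.2).
have f_inv : involutive f by case=> x y; rewrite /f /= !swap0K.
exists f; split; last by rewrite /f /swap0 /= -surjective_pairing.
apply/edge_structure_autP; split=> [|[x1 y1] [x2 y2]]; first exact: inv_bij.
by rewrite /kernel /=; split=> [/(inv_inj (swap0K _))|->].
Qed.

Definition tower_base : tower := existT stage 0 (stage_elt 0 0).

Definition tower_structure : structure ar := edge_structure tower_base (kernel level).

(* An automorphism never moves an element to a higher level: it would map the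
   higher level into the lower one, and stage m -> Prop embeds into any higher
   level, against Cantor's theorem. *)
Lemma no_level_increase (f : tower -> tower) (b : tower) :
  automorphism (A := tower_structure) f -> ~ level b < level (f b).
Proof.
move=> /edge_structure_autP [[g fK gK] f_level] lt_bfb.
set m := level b in lt_bfb.
pose k := level (f b) - m.+1.
have k_level : k + m.+1 = level (f b) by rewrite subnK.
pose code (h : stage m -> Prop) : tower := existT stage (k + m.+1) (lift k (0, h)).
have code_inj : injective code.
  by move=> h1 h2 /(inj_pair2_eq_dec _ Nat.eq_dec _ _ _ _) /lift_inj [].
apply: (@cantor_range _ _ (existT stage m) (g \o code)).
  exact: inj_comp (can_inj gK) code_inj.
move=> h; have : kernel level (f (g (code h))) (f b) by rewrite gK /kernel /= k_level.
by move=> /f_level; rewrite /kernel /=; case: (g (code h)) => n t /= n_m; subst n; exists t.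
Qed.

Lemma tower_orbits : ~ finitely_many_orbits tower_structure.
Proof.
case=> reps reps_orbits.
have [M M_bound] := list_bound level reps.
have [b [b_in [f [aut_f fb]]]] := reps_orbits (existT stage M (stage_elt M 0)).
by apply: (@no_level_increase f b aut_f); rewrite fb; exact: M_bound.
Qed.

Lemma grid_tower_equivalent (phi : formula ar) :
  fo_sentence phi -> fo_sat grid_structure phi -> fo_sat tower_structure phi.
Proof.
move=> phi_closed grid_phi.
pose v_grid (_ : nat) := (0, 0).
pose v_tower (_ : nat) := tower_base.
have grid_classes : infinite_classes (kernel (@fst nat nat)).
  exact: (@kernel_infinite_classes _ _ snd pair).
have tower_classes : infinite_classes (kernel level).
  apply: (@kernel_infinite_classes _ _ (fun p => stage_key (projT2 p))
    (fun n j => existT stage n (stage_elt n j))) => // n j; exact: stage_keyK.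
have match_base : finite_match (kernel (@fst nat nat)) (kernel level) v_grid v_tower.
  by split=> [| | x y | x y] //; [exists [:: (0, 0)] | exists [:: tower_base]] => x; left.
have := edge_structures_equivalent (0, 0) tower_base (kernel_equivalence _)
  (kernel_equivalence _) grid_classes tower_classes phi match_base.
move=> /iffLR /(_ (grid_phi v_grid)).
exact: (@sentence_fo_sat S ar tower_structure phi v_tower phi_closed).
Qed.

Lemma finitely_many_orbits_not_FO :
  ~ FO_expressible (fun A : structure ar => finitely_many_orbits A).
Proof.
case=> phi [phi_closed phi_P]; apply: tower_orbits; apply/phi_P.
by apply: grid_tower_equivalent => //; apply/phi_P; exact: grid_orbits.
Qed.

Fixpoint at_depth (X : structure ar) (n : nat) (a : X) : Prop :=
  match n with
  | 0 => ~ exists y, Erel y a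
  | m.+1 => exists y, at_depth m y /\ Erel y a
  end.

Fixpoint depth_formula (n : nat) : formula ar :=
  match n with
  | 0 => FNeg (FEx 1 (Eat 1 0))
  | m.+1 => FEx m (FAnd (depth_formula m) (Eat m m.+1))
  end.

Lemma eval_depth (X : structure ar) (v : nat -> X) n :
  eval v (depth_formula n) <-> at_depth n (v n).
Proof.
elim: n v => [|n IH] v.
  split=> no_pred [y Ey]; case: no_pred; exists y.
  - by apply/eval_Eat; rewrite upd_same upd_other.
  - by move/eval_Eat: Ey; rewrite upd_same upd_other.
have Sn_n : n.+1 <> n by apply/eqP; rewrite gtn_eqF.
split=> -[y [Dy Ey]]; exists y; split.
- by move/IH: Dy; rewrite upd_same.
- by move/eval_Eat: Ey; rewrite upd_same upd_other.
- by apply/IH; rewrite upd_same.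
- by apply/eval_Eat; rewrite upd_same upd_other.
Qed.

Lemma free_depth y n : free y (depth_formula n) -> y = n.
Proof.
elim: n y => [|n IH] y /=; first by case=> y1 /free_Eat [].
by case=> y_n [/IH|/free_Eat []].
Qed.

Definition pred_unique (X : structure ar) : Prop :=
  forall y y' x : X, Erel y x -> Erel y' x -> y = y'.

Definition pred_unique_formula : formula ar :=
  FAll 0 (FAll 1 (FAll 2 (FImp (Eat 0 2) (FImp (Eat 1 2) (FEq ar 0 1))))).

Lemma eval_pred_unique (X : structure ar) (v : nat -> X) :
  eval v pred_unique_formula <-> pred_unique X.
Proof.
split=> [H y y' x | H].
  by move/eval_FAll/(_ y)/eval_FAll/(_ y')/eval_FAll/(_ x): H;
    rewrite !eval_FImp !eval_Eat /= /upd /=.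
apply/eval_FAll => y; apply/eval_FAll => y'; apply/eval_FAll => x.
by rewrite !eval_FImp !eval_Eat /= /upd /=; apply: H.
Qed.

Definition chain_sentence (n : nat) : formula ar :=
  FAnd pred_unique_formula (FEx n (depth_formula n)).

Lemma eval_chain_sentence (X : structure ar) (v : nat -> X) n :
  eval v (chain_sentence n) <-> pred_unique X /\ exists a : X, at_depth n a.
Proof.
split=> -[uniq [a Da]]; (split; last exists a).
- by move/eval_pred_unique: uniq.
- by move/eval_depth: Da; rewrite upd_same.
- exact/eval_pred_unique.
- by apply/eval_depth; rewrite upd_same.
Qed.

Lemma chain_sentence_closed n : fo_sentence (chain_sentence n).
Proof.
move=> y /= [[y0 [y1 [y2 free_body]]] | [y_n /free_depth //]].
by case: free_body => [/free_Eat []|[/free_Eat []|[]]].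
Qed.

Lemma depth_aut (X : structure ar) (f : X -> X) n (x : X) :
  automorphism f -> at_depth n (f x) -> at_depth n x.
Proof.
move=> aut_f; have [g fK gK] := proj1 aut_f.
elim: n x => [|n IH] x /=.
  by move=> no_pred [y Eyx]; apply: no_pred; exists (f y); apply/(aut_Erel y x aut_f).
move=> [y [Dy Eyfx]]; exists (g y); split; first by apply: IH; rewrite gK.
by apply/(aut_Erel (g y) x aut_f); rewrite gK.
Qed.

Lemma depth_unique (X : structure ar) : pred_unique X ->
  forall n m (a : X), at_depth n a -> at_depth m a -> n = m.
Proof.
move=> uniq; elim=> [|n IH] [|m] a //=.
- by move=> no_pred [y [_ Eya]]; case: no_pred; exists y.
- by move=> [y [_ Eya]] no_pred; case: no_pred; exists y.
- move=> [y [Dy Eya]] [y' [Dy' Ey'a]].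
  by move: Dy'; rewrite -(uniq _ _ _ Eya Ey'a) => /(IH m y Dy) ->.
Qed.

(* Elements at every depth force infinitely many orbits: an orbit stays within
   one depth, and finitely many representatives have boundedly many depths. *)
Lemma all_depths_infinitely_many_orbits (X : structure ar) :
  pred_unique X -> (forall n, exists a : X, at_depth n a) -> ~ finitely_many_orbits X.
Proof.
move=> uniq deep [reps reps_orbits].
have depth_or_none (b : X) : exists k, at_depth k b \/ ~ exists k, at_depth k b.
  case: (classic (exists k, at_depth k b)) => [[k Dk]|no_depth].
    by exists k; left.
  by exists 0; right.
have [M M_bound] := list_bound_witness (fun b _ => depth_or_none b) (l := reps).
have [a Da] := deep M.
have [b [b_in [f [aut_f fb]]]] := reps_orbits a.
have Db : at_depth M b by apply: (depth_aut aut_f); rewrite fb.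
have [k lt_kM [Dk|no_depth]] := M_bound b b_in.
  by move: lt_kM; rewrite (depth_unique uniq Dk Db) ltnn.
by apply: no_depth; exists M.
Qed.

Definition succ_ord (N : nat) (i j : 'I_N.+1) : Prop := nat_of_ord j = (nat_of_ord i).+1.
Definition chain (N : nat) : structure ar := edge_structure (ord0 : 'I_N.+1) (@succ_ord N).

Lemma chain_orbits N : finitely_many_orbits (chain N).
Proof.
exists (enum 'I_N.+1) => a; exists a; split; first exact: In_enum.
by exists id; split; first exact: automorphism_id.
Qed.

Lemma chain_satisfies N n : n <= N -> fo_sat (chain N) (chain_sentence n).
Proof.
move=> le_nN v; apply/eval_chain_sentence.
have chainE (x y : 'I_N.+1) : Erel (X := chain N) x y <-> succ_ord x y := edge_structureE _ _ _ _.
split.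
  move=> y y' x /chainE Eyx /chainE Ey'x; apply: val_inj; apply: succn_inj.
  by rewrite -Eyx -Ey'x.
have deep k (lt_kN : k < N.+1) : at_depth k (Ordinal lt_kN : chain N).
  elim: k lt_kN => [|k IH] lt_kN /=; first by case=> y /chainE.
  by exists (Ordinal (ltnW lt_kN)); split; [exact: IH | exact/chainE].
by exists (Ordinal (le_nN : n < N.+1)).
Qed.

(* A logic extending FO and expressing "finitely many orbits" is not
   aleph0-compact: the sentence th expressing it, together with sentences psi n
   equivalent to chain_sentence n, is finitely satisfiable (in long enough
   finite chains) but not satisfiable. *)
Lemma finitely_many_orbits_not_compact (L : abstract_logic ar) :
  geq_FO L -> expressible L (fun A : structure ar => finitely_many_orbits A) ->
  ~ aleph0_compact L.
Proof.
move=> geq [th th_P] compact.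
have [psi psi_chain] : exists psi : nat -> sentence L,
    forall n A, fo_sat A (chain_sentence n) <-> sat A (psi n).
  apply: (functional_choice (fun n (phi : sentence L) =>
    forall A, fo_sat A (chain_sentence n) <-> sat A phi)) => n.
  apply: geq.
  by exists (chain_sentence n); split=> //; exact: chain_sentence_closed.
pose G phi := phi = th \/ exists n, phi = psi n.
have G_countable : countable_set G.
  exists (fun n => if n is k.+1 then Some (psi k) else Some th) => phi.
  split=> [[->|[n ->]]|[[|n] [<-]]]; [by exists 0 | by exists n.+1 | by left | by right; exists n].
have G_fsat : finitely_satisfiable G.
  have G_index phi : G phi -> exists n, phi = th \/ phi = psi n.
    by case=> [->|[n ->]]; exists n || exists 0; [left | right].
  move=> l l_G.
  have [N N_bound] := list_bound_witness (fun phi phi_l => G_index phi (l_G phi phi_l)).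
  exists (chain N) => phi /N_bound [n lt_nN [->|->]]; first exact/th_P/chain_orbits.
  by apply/(psi_chain n); apply: chain_satisfies; exact: ltnW.
have [A A_G] := compact G G_countable G_fsat.
have A_chain n : pred_unique A /\ exists a : A, at_depth n a.
  have : fo_sat A (chain_sentence n) by apply/(psi_chain n); apply: A_G; right; exists n.
  by move=> /(_ (fun _ => point A)) /eval_chain_sentence.
apply: (all_depths_infinitely_many_orbits (A_chain 0).1 (fun n => (A_chain n).2)).
by apply/th_P/A_G; left.
Qed.

End EdgeStructures.

(* In a logic closed under negation, a sound and complete proof system yields
   full compactness: if G were finitely satisfiable but unsatisfiable, G would
   entail the negation of any th in G, through finitely many premisses from G,
   and a model of those premisses and th would satisfy both th and its negation. *)
Lemma sound_complete_compact (S : Type) (ar : S -> nat) (L : abstract_logic ar)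
    (PS : proof_system L) :
  closed_under_negation L -> ps_sound PS -> ps_complete PS ->
  forall G : sentence L -> Prop, finitely_satisfiable G -> satisfiable G.
Proof.
move=> neg sound complete G G_fsat; apply: NNPP => G_unsat.
case: (classic (exists th, G th)) => [[th G_th]|G_empty]; last first.
  have [A _] := G_fsat [::] (fun _ => False_ind _).
  by apply: G_unsat; exists A => phi G_phi; case: G_empty; exists phi.
have [nth nthE] := neg th.
have G_nth : entails G nth by move=> A A_G; case: G_unsat; exists A.
have [pi [pi_nth pi_G]] := complete G nth G_nth.
have premisses_G phi : In phi (th :: premisses pi) -> G phi by case=> [<-|/pi_G].
have [A A_sat] := G_fsat _ premisses_G.
have : sat A nth by rewrite -pi_nth; apply: (sound pi A) => phi phi_pi; apply: A_sat; right.
by move/nthE; apply; apply: A_sat; left.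
Qed.

Theorem mainTheorem8 (S : Type) (ar : S -> nat)
  (S_countable : exists f : S -> nat, injective f)
  (Q R : S) (QR : Q <> R) (arR : 2 <= ar R) :
  let P : struct_class ar := fun A => finitely_many_orbits A in
  ~ FO_expressible P /\
  (forall L : abstract_logic ar, geq_FO L -> expressible L P -> ~ aleph0_compact L) /\
  (forall L : abstract_logic ar, geq_FO L -> expressible L P -> closed_under_negation L ->
     ~ exists PS : proof_system L, ps_sound PS /\ ps_complete PS).
Proof.
move=> P; split; first exact: finitely_many_orbits_not_FO arR.
split=> [L geq P_L | L geq P_L neg [PS [sound complete]]].
  exact: (finitely_many_orbits_not_compact arR geq P_L).
apply: (finitely_many_orbits_not_compact arR geq P_L) => G _.
exact: sound_complete_compact neg sound complete G.
Qed.
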